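(* For every dynamical system $(S,g)$, the following are equivalent: (1) $(S,g)$ is timed; (2) for every $n\in\mathbb{N}\cup\{\infty\}$ and all $s,w\in S$, if $g(s)=g^{n+1}(w)$ then $s=g^n(w')$ for some $w'\in S$; (3) all maximal $g$-histories of the same state have the same length; (4) there exists an equivalence relation $=^\tau$ on $S$ satisfying the two synchronicity conditions: (i) $s=^\tau w$ iff $g(s)=^\tau g(w)$, and (ii) if $s=^\tau g(w)$ then $s=g(w')$ for some $w'\in S$.
   Context: A dynamical system is a pair $(S,g)$ with $g:S\to S$. A state $s$ is initial if $s\neq g(w)$ for all $w\in S$. A timing map is $\tau:S\to\mathbb{N}\cup\{\infty\}$ with (a) $\tau_s=0$ for every initial state $s$ and (b) $\tau_{g(s)}=\tau_s+1$ for all $s$ (with $\infty+1=\infty$); $(S,g)$ is timed if a timing map exists. A $g$-history of a state $s$ is a finite or infinite sequence $(s_0=s,s_1,s_2,\dots)$ with $s_n=g(s_{n+1})$ for all consecutive entries; its length is the number of states in it; it is maximal if it is infinite or cannot be extended to a $g$-history of greater length. *)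

From Stdlib Require Import List.
Import ListNotations.

(* N ∪ {∞} is represented by option nat: Some n = n, None = ∞. *)
Definition nat_inf := option nat.
Definition succ_inf (n : nat_inf) : nat_inf :=
  match n with Some k => Some (S k) | None => None end.

Fixpoint iterg {S : Type} (g : S -> S) (n : nat) (x : S) : S :=
  match n with 0 => x | Datatypes.S k => g (iterg g k x) end.

Definition initial {S : Type} (g : S -> S) (s : S) : Prop :=
  forall w, s <> g w.

Definition timing_map {S : Type} (g : S -> S) (tau : S -> nat_inf) : Prop :=
  (forall s, initial g s -> tau s = Some 0) /\
  (forall s, tau (g s) = succ_inf (tau s)).

Definition timed {S : Type} (g : S -> S) : Prop :=
  exists tau : S -> nat_inf, timing_map g tau.

(* Finite g-history (s_0 = s, s_1, ..., s_k) is represented by s :: t where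
   is_hist g s t says s = g(t_0), t_0 = g(t_1), ...  Its length is 1 + length t. *)
Fixpoint is_hist {S : Type} (g : S -> S) (s : S) (t : list S) : Prop :=
  match t with
  | [] => True
  | x :: t' => s = g x /\ is_hist g x t'
  end.

Definition inf_hist {S : Type} (g : S -> S) (s : S) (h : nat -> S) : Prop :=
  h 0 = s /\ forall n, h n = g (h (Datatypes.S n)).

(* "x = g^n(w) for some w", for n ∈ N ∪ {∞}; for n = ∞ we read g^∞(w) as
   a state having an infinite g-history. *)
Definition in_image_pow {S : Type} (g : S -> S) (n : nat_inf) (x : S) : Prop :=
  match n with
  | Some k => exists w, x = iterg g k w
  | None => exists h, inf_hist g x h
  end.

Definition max_hist_length {S : Type} (g : S -> S) (s : S) (L : nat_inf) : Prop :=
  (exists t : list S, L = Some (Datatypes.S (length t)) /\ is_hist g s t /\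
     ~ (exists u : list S, u <> [] /\ is_hist g s (t ++ u)))
  \/ (L = None /\ exists h, inf_hist g s h).

(* A timing map is forced: tau s = Some k exactly when s lies in the image of
   g^k but not of g^(k+1), tau s = None exactly when s has an infinite history,
   and tau s + 1 is the length of every maximal history of s.  Conversely, a
   function S -> N ∪ {∞} is a timing map as soon as its graph is total,
   functional, sends initial states to 0 and is carried along by g; condition
   (2) makes "depth in the images of the powers of g" such a graph, condition
   (3) does the same for "length of a maximal history minus one", and
   condition (4) implies (2). *)

From Stdlib Require Import RelationClasses.
From Stdlib Require Import List Classical ClassicalEpsilon.
Import ListNotations.

Lemma succ_inf_inj (m n : nat_inf) : succ_inf m = succ_inf n -> m = n.
Proof. destruct m, n; simpl; congruence. Qed.

Lemma succ_inf_neq0 (n : nat_inf) : succ_inf n <> Some 0.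
Proof. destruct n; simpl; congruence. Qed.

Section Dynamics.

Context {T : Type}.
Variable g : T -> T.

Lemma initial_or_image (s : T) : initial g s \/ exists w, s = g w.
Proof.
  destruct (classic (exists w, s = g w)) as [Hs | Hs]; [now right | left].
  intros w E. apply Hs. now exists w.
Qed.

Lemma iterg_Sr (k : nat) (w : T) : iterg g (S k) w = iterg g k (g w).
Proof. induction k as [|k IH]; [reflexivity|]. simpl in *. now rewrite IH. Qed.

Lemma in_image_pow_S (k : nat) (s : T) :
  in_image_pow g (Some (S k)) s -> in_image_pow g (Some k) s.
Proof. intros [w ->]. exists (g w). apply iterg_Sr. Qed.

Lemma in_image_pow_le (k m : nat) (s : T) :
  k <= m -> in_image_pow g (Some m) s -> in_image_pow g (Some k) s.
Proof. induction 1; auto using in_image_pow_S. Qed.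

Lemma in_image_pow_g (k : nat) (s : T) :
  in_image_pow g (Some k) s -> in_image_pow g (Some (S k)) (g s).
Proof. intros [w ->]. now exists w. Qed.

Lemma inf_hist_g (s : T) (h : nat -> T) :
  inf_hist g s h ->
  inf_hist g (g s) (fun n => match n with 0 => g s | S n => h n end).
Proof. intros [h0 hS]. split; [reflexivity|]. intros [|n]; [congruence | apply hS]. Qed.

(* Dependent choice along g^-1. *)
Lemma inf_hist_of_preimage_closed (P : T -> Prop) :
  (forall x, P x -> exists y, P y /\ x = g y) ->
  forall s, P s -> exists h, inf_hist g s h.
Proof.
  intros HP s Ps.
  pose (pre := fun x : {x | P x} =>
          constructive_indefinite_description _ (HP _ (proj2_sig x))).
  pose (back := fun x : {x | P x} =>
          exist P (proj1_sig (pre x)) (proj1 (proj2_sig (pre x)))).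
  pose (walk := fix walk (n : nat) : {x | P x} :=
          match n with 0 => exist P s Ps | S n => back (walk n) end).
  exists (fun n => proj1_sig (walk n)). split; [reflexivity|].
  intro n. exact (proj2 (proj2_sig (pre (walk n)))).
Qed.

Definition max_fin_hist (s : T) (t : list T) : Prop :=
  is_hist g s t /\ ~ (exists u, u <> [] /\ is_hist g s (t ++ u)).

Lemma max_fin_hist_initial (s : T) : initial g s -> max_fin_hist s [].
Proof.
  intros Hs. split; [exact I|].
  intros [[|w u] [Hu Hwu]]; [congruence | exact (Hs w (proj1 Hwu))].
Qed.

Lemma max_fin_hist_nil (s : T) : max_fin_hist s [] -> initial g s.
Proof.
  intros [_ Hmax] w E. apply Hmax. exists [w]. split; [congruence|]. now split.
Qed.

Lemma max_fin_hist_cons (s x : T) (t : list T) :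
  max_fin_hist s (x :: t) <-> s = g x /\ max_fin_hist x t.
Proof.
  split.
  - intros [[E Ht] Hmax]. split; [exact E|]. split; [exact Ht|].
    intros [u [Hu Htu]]. apply Hmax. exists u. now split.
  - intros [E [Ht Hmax]]. split; [now split|].
    intros [u [Hu [_ Htu]]]. apply Hmax. now exists u.
Qed.

Lemma max_hist_length_fin (s : T) (t : list T) :
  max_fin_hist s t -> max_hist_length g s (Some (S (length t))).
Proof. intros Ht. left. exists t. split; [reflexivity | exact Ht]. Qed.

Lemma max_hist_length_g (s : T) (L : nat_inf) :
  max_hist_length g s L -> max_hist_length g (g s) (succ_inf L).
Proof.
  intros [[t [-> Ht]] | [-> [h Hh]]].
  - apply (max_hist_length_fin (g s) (s :: t)), max_fin_hist_cons. now split.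
  - right. split; [reflexivity|]. exact (ex_intro _ _ (inf_hist_g s h Hh)).
Qed.

Lemma max_hist_length_exists (s : T) :
  exists M, max_hist_length g s (succ_inf M).
Proof.
  destruct (classic (exists t, max_fin_hist s t)) as [[t Ht] | Hnone].
  - exists (Some (length t)). now apply max_hist_length_fin.
  - exists None. right. split; [reflexivity|].
    apply (inf_hist_of_preimage_closed (fun x => ~ exists t, max_fin_hist x t));
      [|exact Hnone].
    intros x Hx. destruct (initial_or_image x) as [Hinit | [w ->]].
    + exfalso. apply Hx. exists []. now apply max_fin_hist_initial.
    + exists w. split; [|reflexivity]. intros [t Ht].
      apply Hx. exists (w :: t). now apply max_fin_hist_cons.
Qed.

Lemma timed_of_graph (H : T -> nat_inf -> Prop) :
  (forall s, exists M, H s M) ->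
  (forall s M N, H s M -> H s N -> M = N) ->
  (forall s, initial g s -> H s (Some 0)) ->
  (forall s M, H s M -> H (g s) (succ_inf M)) ->
  timed g.
Proof.
  intros Htot Hfun Hinit Hstep.
  pose (tau := fun s => proj1_sig (constructive_indefinite_description _ (Htot s))).
  assert (Htau : forall s, H s (tau s))
    by (intro s; exact (proj2_sig (constructive_indefinite_description _ (Htot s)))).
  exists tau. split.
  - intros s Hs. exact (Hfun s _ _ (Htau s) (Hinit s Hs)).
  - intros s. exact (Hfun _ _ _ (Htau (g s)) (Hstep _ _ (Htau s))).
Qed.

Definition image_depth (s : T) (M : nat_inf) : Prop :=
  match M with
  | Some k => in_image_pow g (Some k) s /\ ~ in_image_pow g (Some (S k)) s
  | None => forall k, in_image_pow g (Some k) s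
  end.

Lemma image_depth_exists (s : T) : exists M, image_depth s M.
Proof.
  destruct (classic (exists k, image_depth s (Some k))) as [[k Hk] | Hnone].
  - now exists (Some k).
  - exists None. intro k. induction k as [|k IH]; [now exists s|].
    apply NNPP. intros Hk. apply Hnone. now exists k.
Qed.

Lemma image_depth_functional (s : T) (M N : nat_inf) :
  image_depth s M -> image_depth s N -> M = N.
Proof.
  destruct M as [k|], N as [m|]; simpl; try tauto.
  - intros [Hk Hk'] [Hm Hm'].
    destruct (PeanoNat.Nat.lt_trichotomy k m) as [Hlt | [-> | Hlt]]; [|reflexivity|].
    + exfalso. apply Hk'. exact (in_image_pow_le (S k) m s Hlt Hm).
    + exfalso. apply Hm'. exact (in_image_pow_le (S m) k s Hlt Hk).
  - intros [_ Hk'] Hall. exfalso. exact (Hk' (Hall (S k))).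
  - intros Hall [_ Hm']. exfalso. exact (Hm' (Hall (S m))).
Qed.

Lemma image_depth_initial (s : T) : initial g s -> image_depth s (Some 0).
Proof. intros Hs. split; [now exists s|]. intros [w E]. exact (Hs w E). Qed.

Section ImagePredecessor.

Hypothesis image_pred :
  forall k s w, g s = iterg g (S k) w -> in_image_pow g (Some k) s.

Lemma image_depth_g (s : T) (M : nat_inf) :
  image_depth s M -> image_depth (g s) (succ_inf M).
Proof.
  destruct M as [k|]; simpl.
  - intros [Hk Hk']. split; [now apply in_image_pow_g|].
    intros [w E]. exact (Hk' (image_pred (S k) s w E)).
  - intros Hall [|k]; [now exists (g s) | exact (in_image_pow_g k s (Hall k))].
Qed.

Lemma timed_of_image_pred : timed g.
Proof.
  apply (timed_of_graph image_depth).
  - exact image_depth_exists.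
  - exact image_depth_functional.
  - exact image_depth_initial.
  - exact image_depth_g.
Qed.

End ImagePredecessor.

Section TimingMap.

Variable tau : T -> nat_inf.
Hypothesis Htau : timing_map g tau.

Lemma timing_map_g_eq (s w : T) : tau (g s) = tau (g w) <-> tau s = tau w.
Proof.
  destruct Htau as [_ Hg]. rewrite !Hg. split; [apply succ_inf_inj | congruence].
Qed.

Lemma timing_map_image (s w : T) : tau s = tau (g w) -> exists w', s = g w'.
Proof.
  destruct Htau as [H0 Hg]. intros E.
  destruct (initial_or_image s) as [Hs | Hs]; [|exact Hs].
  rewrite (H0 s Hs), Hg in E. exfalso. exact (succ_inf_neq0 _ (eq_sym E)).
Qed.

Lemma timing_map_eq_iterg (k : nat) :
  forall s w, tau s = tau (iterg g k w) -> in_image_pow g (Some k) s.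
Proof.
  induction k as [|k IH]; intros s w E; [now exists s|].
  destruct (timing_map_image _ _ E) as [s' ->].
  apply timing_map_g_eq, IH in E. now apply in_image_pow_g.
Qed.

Lemma timing_map_none_inf_hist (s : T) : tau s = None -> exists h, inf_hist g s h.
Proof.
  destruct Htau as [H0 Hg]. intros Hs.
  apply (inf_hist_of_preimage_closed (fun x => tau x = None)); [|exact Hs].
  intros x Hx. destruct (initial_or_image x) as [Hinit | [w ->]].
  - rewrite (H0 x Hinit) in Hx. discriminate.
  - exists w. split; [|reflexivity]. apply (succ_inf_inj _ None). now rewrite <- Hg.
Qed.

Lemma inf_hist_timing_map_none (s : T) (h : nat -> T) :
  inf_hist g s h -> tau s = None.
Proof.
  destruct Htau as [_ Hg]. intros [<- hS].
  assert (Hfin : forall j i, tau (h i) <> Some j).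
  { induction j as [|j IH]; intros i E; rewrite hS, Hg in E.
    - exact (succ_inf_neq0 _ E).
    - apply (IH (S i)). apply (succ_inf_inj _ (Some j)). exact E. }
  destruct (tau (h 0)) as [j|] eqn:E; [exfalso; exact (Hfin j 0 E) | reflexivity].
Qed.

Lemma max_fin_hist_timing_map (s : T) (t : list T) :
  max_fin_hist s t -> tau s = Some (length t).
Proof.
  destruct Htau as [H0 Hg]. revert s.
  induction t as [|x t IH]; intros s Ht.
  - now apply H0, max_fin_hist_nil.
  - apply max_fin_hist_cons in Ht as [-> Ht]. rewrite Hg, (IH x Ht). reflexivity.
Qed.

Lemma max_hist_length_timing_map (s : T) (L : nat_inf) :
  max_hist_length g s L -> L = succ_inf (tau s).
Proof.
  intros [[t [-> Ht]] | [-> [h Hh]]].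
  - now rewrite (max_fin_hist_timing_map s t Ht).
  - now rewrite (inf_hist_timing_map_none s h Hh).
Qed.

Lemma timing_map_image_pred (n : nat_inf) (s : T) :
  in_image_pow g (succ_inf n) (g s) -> in_image_pow g n s.
Proof.
  destruct n as [k|]; intros Hs.
  - destruct Hs as [w E]. apply (timing_map_eq_iterg k s w).
    apply timing_map_g_eq. now rewrite E.
  - destruct Hs as [h Hh]. apply timing_map_none_inf_hist.
    apply (succ_inf_inj _ None). rewrite <- (proj2 Htau).
    exact (inf_hist_timing_map_none _ _ Hh).
Qed.

End TimingMap.

Lemma timed_of_max_hist_length_unique :
  (forall s L1 L2, max_hist_length g s L1 -> max_hist_length g s L2 -> L1 = L2) ->
  timed g.
Proof.
  intros Huniq. apply (timed_of_graph (fun s M => max_hist_length g s (succ_inf M))).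
  - exact max_hist_length_exists.
  - intros s M N HM HN. exact (succ_inf_inj _ _ (Huniq s _ _ HM HN)).
  - intros s Hs. apply (max_hist_length_fin s []), max_fin_hist_initial, Hs.
  - intros s M HM. exact (max_hist_length_g s _ HM).
Qed.

Section Synchronicity.

Variable R : T -> T -> Prop.
Hypothesis R_refl : Reflexive R.
Hypothesis R_g : forall s w, R s w <-> R (g s) (g w).
Hypothesis R_image : forall s w, R s (g w) -> exists w', s = g w'.

Lemma sync_iterg_image (k : nat) :
  forall s w, R s (iterg g k w) -> in_image_pow g (Some k) s.
Proof.
  induction k as [|k IH]; intros s w E; [now exists s|].
  destruct (R_image _ _ E) as [s' ->].
  apply in_image_pow_g, (IH _ w), R_g, E.
Qed.

Lemma timed_of_sync : timed g.
Proof.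
  apply timed_of_image_pred. intros k s w E.
  apply (sync_iterg_image k s w), R_g. rewrite E. reflexivity.
Qed.

End Synchronicity.

End Dynamics.

Theorem fact5p2 (S : Type) (g : S -> S) :
  (timed g <->
     (forall (n : nat_inf) (s : S),
         in_image_pow g (succ_inf n) (g s) -> in_image_pow g n s)) /\
  (timed g <->
     (forall (s : S) (L1 L2 : nat_inf),
         max_hist_length g s L1 -> max_hist_length g s L2 -> L1 = L2)) /\
  (timed g <->
     (exists R : S -> S -> Prop,
         Equivalence R /\
         (forall s w, R s w <-> R (g s) (g w)) /\
         (forall s w, R s (g w) -> exists w', s = g w'))).
Proof.
  split; [|split]; split.
  - intros [tau Htau]. exact (timing_map_image_pred g tau Htau).
  - intros Hpred. apply timed_of_image_pred.
    intros k s w E. exact (Hpred (Some k) s (ex_intro _ w E)).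
  - intros [tau Htau] s L1 L2 H1 H2.
    now rewrite (max_hist_length_timing_map g tau Htau s L1 H1),
      (max_hist_length_timing_map g tau Htau s L2 H2).
  - apply timed_of_max_hist_length_unique.
  - intros [tau Htau]. exists (fun s w => tau s = tau w). split; [|split].
    + split; red; congruence.
    + intros s w. symmetry. apply (timing_map_g_eq g tau Htau).
    + intros s w. apply (timing_map_image g tau Htau).
  - intros [R [HR [Hg Hpre]]].
    exact (timed_of_sync g R (@Equivalence_Reflexive _ R HR) Hg Hpre).
Qed.
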